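(* Let $\mathscr J,\mathcal K\subseteq\{1,\dots,n\}$, let $\Delta$ be the simplicial complex with facets $\mathscr J$ and $\mathcal K$, and let $i\in\mathscr J\cap\mathcal K$. Then $$L_{\mathcal K\setminus\{i\}}\cdot L_{\mathscr J}\subseteq P_\Delta R+L_{\mathscr J\setminus\{i\}}.$$
   Context: $\mathbb K$ is a field, $R=\mathbb K[x_{i_1,\dots,i_n}:1\le i_j\le a_j]$. For a tuple $\sigma$ with $\sigma_j\in\{1,\dots,a_j\}\cup\{+\}$, $x_\sigma$ is the sum of all $x_{i_1,\dots,i_n}$ with $i_j=\sigma_j$ whenever $\sigma_j\ne+$. For $\mathscr J\subseteq\{1,\dots,n\}$, $L_{\mathscr J}$ is the ideal of $R$ generated by all $x_\sigma$ with $\sigma_j\in\{1,\dots,a_j\}$ for $j\in\mathscr J$ and $\sigma_j=+$ for $j\notin\mathscr J$ (the entries of the $\mathscr J$-margin of the generic table). $S_\Delta$ is the polynomial ring over $\mathbb K$ in variables $X_\sigma$ for tuples $\sigma$ with $\sigma_j\in\{1,\dots,a_j\}\cup\{\bullet\}$ and $\{j:\sigma_j\ne\bullet\}\in\Delta$. $\tau_\Delta:S_\Delta\to R$ sends $X_\sigma\mapsto x_{\sigma''}$ ($\bullet$ replaced by $+$). $\sigma_\Delta:S_\Delta\to\mathbb K[y_{j,i}:1\le j\le n,1\le i\le a_j]$ sends $X_\sigma\mapsto\prod_jy_{j,\sigma_j}$ with $y_{j,\bullet}$ read as $\sum_iy_{j,i}$; $P_\Delta=\ker\sigma_\Delta$,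 and $P_\Delta R$ is the ideal of $R$ generated by $\tau_\Delta(P_\Delta)$. *)

From HB Require Import structures.
From mathcomp Require Import all_boot all_order all_algebra.
From mathcomp Require Import mpoly.
Set Implicit Arguments. Unset Strict Implicit. Unset Printing Implicit Defensive.
Import GRing.Theory.
Local Open Scope ring_scope.

Definition ideal_gen (S : comNzRingType) (G : S -> Prop) (f : S) : Prop :=
  exists s : seq (S * S), (forall pr, pr \in s -> G pr.2) /\
                          f = \sum_(pr <- s) pr.1 * pr.2.

Definition ideal_add (S : comNzRingType) (I J : S -> Prop) : S -> Prop :=
  ideal_gen (fun f => I f \/ J f).

Definition ideal_mul (S : comNzRingType) (I J : S -> Prop) : S -> Prop :=
  ideal_gen (fun f => exists g h, [/\ I g, J h & f = g * h]).

Definition ideal_sub (S : comNzRingType) (I J : S -> Prop) : Prop :=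
  forall f, I f -> J f.

(* Indices i_j in {1..a_j} are encoded 0-based as 'I_(a j); j in {1..n} as 'I_n. *)
Section Tables.
Variables (F : fieldType) (n : nat) (a : 'I_n -> nat).

Definition cell : finType := {dffun forall j : 'I_n, 'I_(a j)}.
(* tuples sigma with sigma_j in {1..a_j} u {+}; None stands for + (or bullet) *)
Definition mtuple : finType := {dffun forall j : 'I_n, option 'I_(a j)}.

Definition Rring := {mpoly F[#|cell|]}.
Definition xvar (c : cell) : Rring := 'X_(enum_rank c).

Definition xsum (s : mtuple) : Rring :=
  \sum_(c : cell | [forall j, if s j is Some k then c j == k else true]) xvar c.

Definition supp (s : mtuple) : {set 'I_n} := [set j | s j != None].

Definition Lideal (J : {set 'I_n}) : Rring -> Prop :=
  ideal_gen (fun f => exists s : mtuple, supp s = J /\ f = xsum s).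

(* Delta = simplicial complex with facets J and K *)
Definition face2 (J K : {set 'I_n}) (A : {set 'I_n}) : bool :=
  (A \subset J) || (A \subset K).

Definition Svars (J K : {set 'I_n}) : finType := {s : mtuple | face2 J K (supp s)}.
Definition Sring (J K : {set 'I_n}) := {mpoly F[#|Svars J K|]}.

Definition yidx : finType := {j : 'I_n & 'I_(a j)}.
Definition Yring := {mpoly F[#|yidx|]}.
Definition yvar (ji : yidx) : Yring := 'X_(enum_rank ji).
Definition ybul (j : 'I_n) : Yring := \sum_(i : 'I_(a j)) yvar (Tagged _ i).
Definition yent (j : 'I_n) (o : option 'I_(a j)) : Yring :=
  if o is Some i then yvar (Tagged _ i) else ybul j.

Definition sigmaD (J K : {set 'I_n}) (p : Sring J K) : Yring :=
  p \mPo [tuple \prod_(j : 'I_n) yent (val (enum_val k) j) | k < #|Svars J K|].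

Definition tauD (J K : {set 'I_n}) (p : Sring J K) : Rring :=
  p \mPo [tuple xsum (val (enum_val k)) | k < #|Svars J K|].

(* P_Delta R : ideal of R generated by tau_Delta(P_Delta), P_Delta = ker sigma_Delta *)
Definition PDeltaR (J K : {set 'I_n}) : Rring -> Prop :=
  ideal_gen (fun f => exists p : Sring J K, sigmaD p = 0 /\ f = tauD p).

End Tables.

From HB Require Import structures.
From mathcomp Require Import all_boot all_order all_algebra.
From mathcomp Require Import mpoly.
Set Implicit Arguments. Unset Strict Implicit. Unset Printing Implicit Defensive.
Import GRing.Theory.
Local Open Scope ring_scope.

(* It suffices to treat products of generators x_s * x_t with supp s = K \ i
   and supp t = J.  Moving the i-th coordinate of t into s gives s' with
   supp s' <= K and t' with supp t' = J \ i.  The binomial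
   X_s X_t - X_s' X_t' lies in P_Delta, because both monomials map to the same
   product of y's, so x_s x_t = tau(X_s X_t - X_s' X_t') + x_s' x_t'. *)

Section IdealGen.
Variable S : comNzRingType.
Implicit Types (G : S -> Prop) (f g : S).

Lemma ideal_gen_mem G f : G f -> ideal_gen G f.
Proof.
move=> Gf; exists [:: (1, f)]; rewrite big_seq1 mul1r; split=> //.
by move=> pr; rewrite inE => /eqP ->.
Qed.

Lemma ideal_gen0 G : ideal_gen G 0.
Proof. by exists [::]; rewrite big_nil. Qed.

Lemma ideal_genD G f g : ideal_gen G f -> ideal_gen G g -> ideal_gen G (f + g).
Proof.
move=> [s [Gs ->]] [t [Gt ->]]; exists (s ++ t); rewrite big_cat; split=> //.
by move=> pr; rewrite mem_cat => /orP [/Gs|/Gt].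
Qed.

Lemma ideal_genMl G c f : ideal_gen G f -> ideal_gen G (c * f).
Proof.
move=> [s [Gs ->]]; exists [seq (c * pr.1, pr.2) | pr <- s]; split.
  by move=> pr /mapP [q /Gs Gq ->].
by rewrite big_map big_distrr; apply: eq_bigr => pr _ /=; rewrite mulrA.
Qed.

Lemma ideal_gen_sum G (I : eqType) (r : seq I) (E : I -> S) :
  (forall k, k \in r -> ideal_gen G (E k)) -> ideal_gen G (\sum_(k <- r) E k).
Proof.
elim: r => [|x r IHr] GE; first by rewrite big_nil; exact: ideal_gen0.
rewrite big_cons; apply: ideal_genD; first by apply: GE; rewrite mem_head.
by apply: IHr => k kr; apply: GE; rewrite inE kr orbT.
Qed.

Lemma ideal_gen_mul_sub GI GJ G :
    (forall g h, GI g -> GJ h -> ideal_gen G (g * h)) ->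
  ideal_sub (ideal_mul (ideal_gen GI) (ideal_gen GJ)) (ideal_gen G).
Proof.
move=> GIJ f [s [Hs ->]]; apply: ideal_gen_sum => pr.
move=> /Hs [_ [_ [[u [Hu ->]] [v [Hv ->]] ->]]].
apply: ideal_genMl; rewrite big_distrl /=; apply: ideal_gen_sum => p /Hu GIp.
rewrite -mulrA; apply: ideal_genMl; rewrite big_distrr /=.
apply: ideal_gen_sum => q /Hv GJq; rewrite mulrCA; apply: ideal_genMl; exact: GIJ.
Qed.

End IdealGen.

Section Tables.
Variables (F : fieldType) (n : nat) (a : 'I_n -> nat).
Implicit Types (s t : mtuple a) (J K : {set 'I_n}).

Definition mtuple_swap s t (j : 'I_n) : mtuple a :=
  [ffun k => if k == j then t k else s k].

Lemma supp_mtuple_swap s t j :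
  supp (mtuple_swap s t j) = supp s :\ j :|: supp t :&: [set j].
Proof.
by apply/setP => k; rewrite !inE ffunE; case: (k == j); rewrite ?andbT ?andbF ?orbF.
Qed.

Lemma yent_mtuple_swap s t j k :
  yent F (mtuple_swap s t j k) * yent F (mtuple_swap t s j k) =
  yent F (s k) * yent F (t k).
Proof. by rewrite !ffunE; case: (k == j); rewrite // mulrC. Qed.

Lemma comp_mpoly_Svar J K m (f : Svars a J K -> {mpoly F[m]}) v :
  ('X_(enum_rank v) : Sring F a J K) \mPo [tuple f (enum_val k) | k < #|Svars a J K|]
  = f v.
Proof. by rewrite comp_mpolyXU -tnth_nth tnth_mktuple enum_rankK. Qed.

Lemma PDeltaR_binomial J K (v1 v2 v3 v4 : Svars a J K) :
    (forall j, yent F (val v1 j) * yent F (val v2 j) =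
               yent F (val v3 j) * yent F (val v4 j)) ->
  @PDeltaR F n a J K
    (xsum F (val v1) * xsum F (val v2) - xsum F (val v3) * xsum F (val v4)).
Proof.
move=> yeq; pose X v : Sring F a J K := 'X_(enum_rank v).
apply: ideal_gen_mem; exists (X v1 * X v2 - X v3 * X v4); split.
  rewrite /sigmaD /X rmorphB !rmorphM /=.
  rewrite !(comp_mpoly_Svar (fun v => \prod_j yent F (val v j))) -!big_split /=.
  by apply/eqP; rewrite subr_eq0 (eq_bigr _ (fun j _ => yeq j)).
by rewrite /tauD /X rmorphB !rmorphM /= !(comp_mpoly_Svar (fun v => xsum F (val v))).
Qed.

Lemma xsum_mul_mem_PDeltaR_add J K i s t :
    i \in K -> supp s = K :\ i -> supp t = J ->
  ideal_add (@PDeltaR F n a J K) (@Lideal F n a (J :\ i)) (xsum F s * xsum F t).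
Proof.
move=> iK supp_s supp_t.
pose s' := mtuple_swap s t i; pose t' := mtuple_swap t s i.
have supp_t' : supp t' = J :\ i.
  rewrite supp_mtuple_swap supp_t supp_s; apply/setP => k.
  by rewrite !inE; case: (k == i); rewrite ?andbF ?orbF.
have face_s : face2 J K (supp s) by rewrite /face2 supp_s subD1set orbT.
have face_t : face2 J K (supp t) by rewrite /face2 supp_t subxx.
have face_s' : face2 J K (supp s').
  apply/orP; right; rewrite supp_mtuple_swap supp_s subUset.
  by rewrite (subset_trans (subD1set _ _) (subD1set _ _)) subIset // sub1set iK orbT.
have face_t' : face2 J K (supp t') by rewrite /face2 supp_t' subD1set.
rewrite -(subrK (xsum F s' * xsum F t') (xsum F s * xsum F t)).
apply: ideal_genD; apply: ideal_gen_mem; [left | right].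
  apply: (@PDeltaR_binomial _ _ (Sub s face_s) (Sub t face_t)
                              (Sub s' face_s') (Sub t' face_t')).
  by move=> j; rewrite /= yent_mtuple_swap.
by apply: ideal_genMl; apply: ideal_gen_mem; exists t'.
Qed.

End Tables.

Theorem lemma6p4 (F : fieldType) (n : nat) (a : 'I_n -> nat)
    (J K : {set 'I_n}) (i : 'I_n) (hi : i \in J :&: K) :
  ideal_sub
    (ideal_mul (@Lideal F n a (K :\ i)) (@Lideal F n a J))
    (ideal_add (@PDeltaR F n a J K) (@Lideal F n a (J :\ i))).
Proof.
have /setIP [_ iK] := hi.
apply: ideal_gen_mul_sub => _ _ [s [supp_s ->]] [t [supp_t ->]].
exact: xsum_mul_mem_PDeltaR_add.
Qed.
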